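(* Let $F$ be a real closed field and $F(y)$ the rational function field in one variable. Then for every $\zeta\in M(F(y))$, the preimage $\lambda^{-1}(\zeta)$ consists of at most two orderings of $F(y)$.
   Context: $M(K)$ denotes the set of $\mathbb R$-places $K\to\mathbb R\cup\{\infty\}$ of a field $K$. For an ordering $P$ of $K$, $\lambda(P)\in M(K)$ is the $\mathbb R$-place associated with $P$: the unique $\mathbb R$-place compatible with $P$ (sending non-negative elements to non-negative reals or $\infty$), namely the place of the convex hull of $\mathbb Q$ in $(K,P)$ composed with the order embedding of its residue field into $\mathbb R$. Here $\lambda$ is the map from the set of orderings of $F(y)$ to $M(F(y))$. *)

From HB Require Import structures.
From mathcomp Require Import all_boot all_order all_algebra fraction.
From mathcomp Require Import Rstruct.
From Stdlib Require Import Reals.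

Set Implicit Arguments.
Unset Strict Implicit.
Unset Printing Implicit Defensive.

Import Order.TTheory GRing.Theory Num.Theory.
Local Open Scope ring_scope.

Notation Real := Rdefinitions.R.

(* An ordering of a field K, given by its positive cone P
   (the set of elements >= 0): P + P <= P, P P <= P, P u -P = K,
   P n -P = {0}. *)
Definition ordering (K : fieldType) (P : K -> Prop) : Prop :=
  [/\ (forall a b, P a -> P b -> P (a + b)),
      (forall a b, P a -> P b -> P (a * b)),
      (forall a, P a \/ P (- a)) &
      (forall a, P a -> P (- a) -> a = 0)].

(* An R-place of K : a map K -> R u {oo} (None encodes oo) such that
   the set O of elements with finite value is a ring, the map restricted
   to O is a ring homomorphism into R, and if xi x = oo then x <> 0 and
   xi (x^-1) = 0  (Lang's definition of a place). *)
Definition real_place (K : fieldType) (xi : K -> option Real) : Prop :=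
  [/\ xi 1 = Some 1,
      (forall a b x y, xi a = Some x -> xi b = Some y ->
          xi (a + b) = Some (x + y) /\ xi (a * b) = Some (x * y)),
      (forall a x, xi a = Some x -> xi (- a) = Some (- x)) &
      (forall a, xi a = None -> a != 0 /\ xi (a^-1) = Some 0)].

Definition M (K : fieldType) : (K -> option Real) -> Prop := @real_place K.

Definition compatible (K : fieldType) (P : K -> Prop) (xi : K -> option Real)
  : Prop :=
  forall a, P a -> xi a = None \/ exists x, xi a = Some x /\ 0 <= x.

(* lambda(P) = xi : xi is the (unique) R-place compatible with P. *)
Definition lambda_is (K : fieldType) (P : K -> Prop) (xi : K -> option Real)
  : Prop := M xi /\ compatible P xi.

Notation ratfun F := {fraction {poly F}}.

From mathcomp Require Import all_boot all_order all_algebra fraction.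
From mathcomp Require Import Rstruct complex.
From mathcomp.algebra_tactics Require Import ring.
From Stdlib Require Import Classical FunctionalExtensionality PropExtensionality.

(* Two orderings compatible with the same R-place agree on the sign of every
   element whose value is finite and nonzero.  Since F is real closed, every
   polynomial is a constant times linear factors y - a and sums of squares, so
   an ordering of F(y) is determined by the signs of the y - a.
   If some y - a0 has finite value relative to every y - a, then each y - a
   is, up to such a unit, either y - a0 or a constant, so the sign of y - a0
   alone determines the ordering: at most two orderings.  Otherwise every
   y - a is a constant up to a unit and the ordering is unique. *)

Set Implicit Arguments.
Unset Strict Implicit.
Unset Printing Implicit Defensive.

Import Order.TTheory GRing.Theory Num.Theory.
Local Open Scope ring_scope.

Section Orderings.
Variable K : fieldType.
Implicit Types (P Q : K -> Prop) (x z : K).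

Lemma ordering0 P : ordering P -> P 0.
Proof. by case=> _ _ hT _; have [] := hT 0; rewrite ?oppr0. Qed.

Lemma ordering_sqr P x : ordering P -> P (x * x).
Proof.
case=> _ hM hT _; have [px|pNx] := hT x; first exact: hM.
by rewrite -mulrNN; apply: hM.
Qed.

Lemma orderingNP P x : ordering P -> x != 0 -> (P x <-> ~ P (- x)).
Proof.
case=> _ _ hT hA x0; split; last by case: (hT x).
by move=> px pNx; move/eqP: x0; apply; apply: hA.
Qed.

Lemma orderingM P x z : ordering P -> x != 0 -> z != 0 ->
  (P (x * z) <-> (P x <-> P z)).
Proof.
move=> oP x0 z0; have [_ hM hT _] := oP.
have ex := orderingNP oP x0; have ez := orderingNP oP z0.
have exz := orderingNP oP (mulf_neq0 x0 z0).
by have [px|px] := hT x; have [pz|pz] := hT z; have := hM _ _ px pz;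
  rewrite ?mulrNN ?mulrN ?mulNr; tauto.
Qed.

Definition same_sign P Q x := P x <-> Q x.

Variables P Q : K -> Prop.
Hypotheses (oP : ordering P) (oQ : ordering Q).

Lemma same_sign0 : same_sign P Q 0.
Proof. by split=> _; apply: ordering0. Qed.

Lemma same_signM x z :
  same_sign P Q x -> same_sign P Q z -> same_sign P Q (x * z).
Proof.
have [->|x0] := eqVneq x 0; first by rewrite mul0r => _ _; apply: same_sign0.
have [->|z0] := eqVneq z 0; first by rewrite mulr0 => _ _; apply: same_sign0.
by rewrite /same_sign (orderingM oP x0 z0) (orderingM oQ x0 z0); tauto.
Qed.

Lemma same_signV x : same_sign P Q x -> same_sign P Q x^-1.
Proof.
have [->|x0] := eqVneq x 0; first by rewrite invr0.
move=> sx; have -> : x^-1 = x * (x^-1 * x^-1) by rewrite mulrA mulfV ?mul1r.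
by apply: same_signM => //; split=> _; apply: ordering_sqr.
Qed.

End Orderings.

Section RealPlace.
Variables (K : fieldType) (zeta : K -> option Real).
Hypothesis hz : real_place zeta.

Lemma real_place0 : zeta 0 = Some 0.
Proof.
have [h1 hadd hopp _] := hz.
by have [] := hadd _ _ _ _ h1 (hopp _ _ h1); rewrite !subrr.
Qed.

Lemma real_placeV_infty x : zeta x = None -> zeta x^-1 = Some 0.
Proof. by case: hz => _ _ _ /[apply] -[]. Qed.

Lemma real_place_1B x : zeta x = Some 0 -> zeta (1 - x) = Some 1.
Proof.
have [h1 hadd hopp _] := hz => hx.
by have [] := hadd _ _ _ _ h1 (hopp _ _ hx); rewrite oppr0 addr0.
Qed.

Lemma compatible_unitP P u r : ordering P -> compatible P zeta ->
  zeta u = Some r -> r != 0 -> (P u <-> 0 < r).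
Proof.
move=> [_ _ hT _] cP hu r0; split.
  by move/cP; rewrite hu => -[//|[_ [[<-]]]]; rewrite lt_neqAle eq_sym r0.
move=> r_gt0; have [//|pNu] := hT u.
have [_ _ hopp _] := hz; move: (cP _ pNu); rewrite (hopp _ _ hu).
by case=> // -[_ [[<-]]]; rewrite oppr_ge0 leNgt r_gt0.
Qed.

Variables P Q : K -> Prop.
Hypotheses (oP : ordering P) (oQ : ordering Q).
Hypotheses (cP : compatible P zeta) (cQ : compatible Q zeta).

Lemma same_sign_unit u r : zeta u = Some r -> r != 0 -> same_sign P Q u.
Proof.
by move=> hu r0; rewrite /same_sign (compatible_unitP oP cP hu r0)
  (compatible_unitP oQ cQ hu r0).
Qed.

(* [t = (t - s) / (1 - s / t)], and [1 - s / t] has value 1. *)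
Lemma same_sign_residue0 (t s : K) : t != 0 -> zeta (s / t) = Some 0 ->
  same_sign P Q (t - s) -> same_sign P Q t.
Proof.
move=> t0 hst sts; have h1 := real_place_1B hst.
have u0 : 1 - s / t != 0.
  by apply/eqP => e; move: h1; rewrite e real_place0 => -[/eqP]; rewrite eq_sym oner_eq0.
have ts0 : t - s != 0.
  by apply: contraNneq u0 => /subr0_eq st; rewrite -st mulfV // subrr.
have -> : t = (t - s) / (1 - s / t) by field; rewrite t0 ts0.
by apply: same_signM => //; apply: same_signV => //; apply: same_sign_unit h1 _; rewrite oner_eq0.
Qed.

End RealPlace.

Section RealClosedPolynomials.
Local Open Scope complex_scope.
Variable F : rcfType.
Local Notation rc := (real_complex F).

Definition quad_poly (u v : F) : {poly F} := ('X - u%:P) ^+ 2 + (v ^+ 2)%:P.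

Lemma size_quad_poly u v : size (quad_poly u v) = 3.
Proof.
rewrite /quad_poly size_polyDl size_exp_XsubC //.
exact: leq_ltn_trans (size_polyC_leq1 _) _.
Qed.

Lemma quad_poly_root u v : root (map_poly rc (quad_poly u v)) (u +i* v).
Proof.
rewrite /root /quad_poly rmorphD rmorphXn rmorphB /= map_polyX !map_polyC /=.
by rewrite !hornerE; simpc; rewrite -expr2 addNr.
Qed.

Lemma size2_poly_nonreal_root (r : {poly F}) u v : v != 0 -> (size r <= 2)%N ->
  root (map_poly rc r) (u +i* v) -> r = 0.
Proof.
move=> v0 sr; have -> : r = (r`_0)%:P + (r`_1)%:P * 'X.
  apply/polyP => -[|[|i]]; rewrite coefD coefC coefMX coefC /= ?addr0 ?add0r //.
  by rewrite nth_default // (leq_trans sr).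
move: (r`_0) (r`_1) => a b.
rewrite /root rmorphD rmorphM /= map_polyX !map_polyC /= !hornerE; simpc.
move=> /eqP [ha hb]; have b0 : b = 0.
  by move/eqP: hb; rewrite mulf_eq0 (negbTE v0) orbF => /eqP.
by move: ha; rewrite b0 mul0r !addr0 => ->; rewrite mul0r addr0.
Qed.

Lemma rcf_poly_factor (p : {poly F}) : (1 < size p)%N ->
  (exists a, root p a) \/ (exists u v q, p = q * quad_poly u v).
Proof.
move=> p1; have : size (map_poly rc p) != 1 by rewrite size_map_poly; case: size p1 => [|[]].
case/closed_rootP => -[u v] pz; have [v0|v0] := eqVneq v 0.
  left; exists u; move: pz; rewrite v0 complexr0 /root horner_map /=.
  by rewrite -[0 : F[i]]/(rc 0) (inj_eq (@complexI F)).
right; exists u, v, (p %/ quad_poly u v).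
have q0 : quad_poly u v != 0 by rewrite -size_poly_eq0 size_quad_poly.
suff : p %% quad_poly u v = 0 by move=> pr0; rewrite {1}(divp_eq p (quad_poly u v)) pr0 addr0.
apply: (size2_poly_nonreal_root (u := u) v0).
  by have := ltn_modp p (quad_poly u v); rewrite q0 size_quad_poly.
move: pz; rewrite /root {1}(divp_eq p (quad_poly u v)) rmorphD rmorphM /= hornerD hornerM.
by move/eqP: (quad_poly_root u v) => ->; rewrite mulr0 add0r.
Qed.

End RealClosedPolynomials.

Section RationalFunctionOrderings.
Variable F : rcfType.
Local Notation K := (ratfun F).
Local Notation tf := (@FracField.tofrac {poly F}).
Local Notation y := (tf 'X).

Lemma ordering_polyC (R : K -> Prop) (a : F) : ordering R ->
  (R (tf a%:P) <-> 0 <= a).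
Proof.
move=> oR; have sqrtE b : 0 <= b -> tf b%:P = tf (Num.sqrt b)%:P * tf (Num.sqrt b)%:P.
  by move=> b0; rewrite -tofracM -polyCM -expr2 sqr_sqrtr.
split; last by move=> a0; rewrite sqrtE //; apply: ordering_sqr.
move=> Ra; rewrite leNgt; apply/negP => a_lt0.
have a0 : tf a%:P != 0 by rewrite tofrac_eq0 polyC_eq0 ltr0_neq0.
apply: (iffLR (orderingNP oR a0) Ra).
by rewrite -tofracN -polyCN sqrtE ?oppr_ge0 ?ltW //; apply: ordering_sqr.
Qed.

Lemma ordering_quad_poly (R : K -> Prop) u v : ordering R -> R (tf (quad_poly u v)).
Proof.
move=> oR; have [hD _ _ _] := oR.
by rewrite tofracD tofracXn polyCM tofracM !expr2; apply: hD; apply: ordering_sqr oR.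
Qed.

Variables P Q : K -> Prop.
Hypotheses (oP : ordering P) (oQ : ordering Q).

Lemma same_sign_polyC (a : F) : same_sign P Q (tf a%:P).
Proof. by rewrite /same_sign (ordering_polyC _ oP) (ordering_polyC _ oQ). Qed.

Hypothesis same_sign_lin : forall a, same_sign P Q (y - tf a%:P).

Lemma same_sign_poly p : same_sign P Q (tf p).
Proof.
elim: (size p).+1 {-2}p (ltnSn (size p)) => // n IH {}p; rewrite ltnS => sp.
have [p1|p1] := leqP (size p) 1.
  by rewrite [p]size1_polyC //; apply: same_sign_polyC.
have p0 : p != 0 by rewrite -size_poly_eq0 -lt0n (ltn_trans _ p1).
have [[a /factor_theorem pE]|[u [v [q pE]]]] := rcf_poly_factor p1.
- have [q qE] := pE; rewrite qE tofracM tofracB.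
  have q0 : q != 0 by apply: contraNneq p0 => q0; rewrite qE q0 mul0r.
  apply: same_signM => //; apply: IH.
  move: sp; rewrite qE size_mul ?polyXsubC_eq0 // size_XsubC addn2.
  by apply: leq_trans.
- rewrite pE tofracM; apply: same_signM => //; last by split=> _; apply: ordering_quad_poly.
  have q0 : q != 0 by apply: contraNneq p0 => q0; rewrite pE q0 mul0r.
  have quad0 : quad_poly u v != 0 by rewrite -size_poly_eq0 size_quad_poly.
  apply: IH; move: sp; rewrite pE size_mul // size_quad_poly addn3.
  by apply: leq_trans; rewrite ltnS leqnSn.
Qed.

Lemma fraction_quotient (f : K) : exists n d : {poly F}, f = tf n / tf d.
Proof.
elim/quotW: f => r; exists r.1, r.2.
apply: (@mulIf _ (tf r.2)); first by rewrite tofrac_eq0 denom_ratioP.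
rewrite mulfVK ?tofrac_eq0 ?denom_ratioP // /FracField.tofrac; unlock.
rewrite -[_ * _]/(FracField.mul _ _) -FracField.pi_mul; apply/eqmodP => /=.
rewrite FracField.equivfE /FracField.mulf /=.
by rewrite !numden_Ratio ?mulr1 ?oner_eq0 ?mulf_neq0 ?denom_ratioP //= mulrC.
Qed.

Lemma same_sign_ratfun f : same_sign P Q f.
Proof.
have [n [d ->]] := fraction_quotient f.
by apply: same_signM => //; [|apply: same_signV => //]; apply: same_sign_poly.
Qed.

Lemma ordering_eq_of_same_sign_lin : P = Q.
Proof.
apply: functional_extensionality => f; apply: propositional_extensionality.
exact: same_sign_ratfun.
Qed.

End RationalFunctionOrderings.

Section PlaceOrderings.
Variable F : rcfType.
Local Notation K := (ratfun F).
Local Notation tf := (@FracField.tofrac {poly F}).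
Local Notation y := (tf 'X).
Variable zeta : K -> option Real.
Hypothesis hz : real_place zeta.

Lemma y_subC_neq0 (a : F) : y - tf a%:P != 0.
Proof. by rewrite -tofracB tofrac_eq0 polyXsubC_eq0. Qed.

Lemma same_sign_residue0_lin (P Q : K -> Prop) (a b : F) :
  ordering P -> ordering Q -> compatible P zeta -> compatible Q zeta ->
  zeta ((y - tf b%:P) / (y - tf a%:P)) = Some 0 -> same_sign P Q (y - tf a%:P).
Proof.
move=> oP oQ cP cQ hba; apply: (same_sign_residue0 hz oP oQ cP cQ (y_subC_neq0 a) hba).
have -> : y - tf a%:P - (y - tf b%:P) = tf (b - a)%:P by rewrite polyCB tofracB; ring.
exact: same_sign_polyC.
Qed.

Lemma real_place_separating_element : exists t : K,
  forall P Q, ordering P -> ordering Q -> compatible P zeta -> compatible Q zeta ->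
  same_sign P Q t -> P = Q.
Proof.
have [[a0 fin]|inf] := classic (exists a0 : F,
  forall a, zeta ((y - tf a0%:P) / (y - tf a%:P)) <> None).
  exists (y - tf a0%:P) => P Q oP oQ cP cQ st; apply: ordering_eq_of_same_sign_lin => // a.
  case ez: (zeta _) (fin a) => [r|] // _; have [r0|r0] := eqVneq r 0.
    by apply: (same_sign_residue0_lin (b := a0) oP oQ cP cQ); rewrite ez r0.
  rewrite -[y - _](mulfVK (y_subC_neq0 a0)) -invf_div.
  by apply: same_signM => //; apply: same_signV => //; apply: same_sign_unit ez r0.
exists 1 => P Q oP oQ cP cQ _; apply: ordering_eq_of_same_sign_lin => // a.
have [b hab] : exists b, zeta ((y - tf a%:P) / (y - tf b%:P)) = None.
  by apply: NNPP => nb; apply: inf; exists a => b hb; apply: nb; exists b.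
apply: (same_sign_residue0_lin (b := b) oP oQ cP cQ).
by rewrite -invf_div; apply: real_placeV_infty.
Qed.

End PlaceOrderings.

Theorem proposition2p5 (F : rcfType) (zeta : ratfun F -> option Real) :
  M zeta ->
  forall P1 P2 P3 : ratfun F -> Prop,
    ordering P1 -> ordering P2 -> ordering P3 ->
    lambda_is P1 zeta -> lambda_is P2 zeta -> lambda_is P3 zeta ->
    P1 = P2 \/ P1 = P3 \/ P2 = P3.
Proof.
move=> hz P1 P2 P3 o1 o2 o3 [_ c1] [_ c2] [_ c3].
have [t sep] := real_place_separating_element hz.
have [s12|n12] := classic (same_sign P1 P2 t); first by left; apply: sep.
have [s13|n13] := classic (same_sign P1 P3 t); first by right; left; apply: sep.
right; right; apply: sep => //; move: n12 n13; rewrite /same_sign.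
by case: (classic (P1 t)); case: (classic (P2 t)); case: (classic (P3 t)); tauto.
Qed.
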